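(* Consider the model $Y=g(X)+\varepsilon$ with $E[\varepsilon\mid Z]=0$ a.s. and $g\in L_2(X)$, where $X=(1,X_2)'$ and $X_2\in\{0,1\}$ is a binary (possibly endogenous) variable. Assume $E[Y^2]<\infty$, $0<\bar\pi<1$ and $\mathrm{var}(\pi(Z))>0$. Then there exists $h\in L_2(Z)^2$ with $E[h(Z)\mid X]=X$ a.s. Moreover, the minimum-norm solution $h_0$ of this equation has second component (the one corresponding to $X_2$) $$h_0(z)=\alpha+\gamma\pi(z),\qquad \gamma=\frac{\bar\pi(1-\bar\pi)}{\mathrm{var}(\pi(Z))},\quad \alpha=\bar\pi(1-\gamma).$$ Furthermore, the OLIVA $\beta=E[XX']^{-1}E[Xg(X)]$ equals $\beta=(c^{IV}_\pi,\alpha^{IV}_\pi)'$, where $$\alpha^{IV}_\pi=\frac{\mathrm{Cov}(Y,\pi(Z))}{\mathrm{Cov}(X_2,\pi(Z))},\qquad c^{IV}_\pi=E[Y]-\alpha^{IV}_\pi\bar\pi .$$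
   Context: $\pi(z)=\Pr(X_2=1\mid Z=z)$ is the propensity score, and $\bar\pi=\Pr(X_2=1)$. $L_2(V)$ denotes the square-integrable measurable functions of $V$. The minimum-norm solution is the solution of minimal $L_2(Z)$-norm, taken componentwise. *)

From HB Require Import structures.
From mathcomp Require Import all_boot all_order all_algebra.
From mathcomp Require Import all_classical all_reals all_analysis.
Set Implicit Arguments. Unset Strict Implicit. Unset Printing Implicit Defensive.
Import Order.TTheory GRing.Theory Num.Theory.
Local Open Scope classical_set_scope.
Local Open Scope ring_scope.

Section iv_defs.
Context {d : measure_display} {T : measurableType d} {R : realType}
  (P : probability T R).

(* [is_condexp P U V f]:  f(V) is a version of E[U | V], i.e.
   U is integrable, f is measurable, f(V) is integrable, and
   E[U 1_{V in A}] = E[f(V) 1_{V in A}] for every measurable A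
   (Kolmogorov's definition of conditional expectation given sigma(V)). *)
Definition is_condexp {dV} {TV : measurableType dV} (U : T -> R) (V : T -> TV)
    (f : TV -> R) : Prop :=
  [/\ P.-integrable setT (EFin \o U),
      measurable_fun setT f,
      P.-integrable setT (EFin \o (f \o V)) &
      forall A : set TV, measurable A ->
        ('E_P[U \* \1_(V @^-1` A)] = 'E_P[(f \o V) \* \1_(V @^-1` A)])%E].

Definition L2_of {dZ} {TZ : measurableType dZ} (Z : T -> TZ) (h : TZ -> R) : Prop :=
  measurable_fun setT h /\ (h \o Z) \in Lfun P 2.

Definition L2_sqnorm {dZ} {TZ : measurableType dZ} (Z : T -> TZ) (h : TZ -> R) : \bar R :=
  'E_P[fun t => (h (Z t)) ^+ 2].

(* h = (h1, h2) in L_2(Z)^2 solves E[h(Z) | X] = X a.s. (componentwise),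
   where X : T -> R * R is the regressor vector. *)
Definition iv_solution {dZ} {TZ : measurableType dZ} (Z : T -> TZ)
    (X : T -> R * R) (h : TZ -> R * R) : Prop :=
  [/\ L2_of Z (fun z => (h z).1), L2_of Z (fun z => (h z).2),
      is_condexp (fun t => (h (Z t)).1) X (fun x => x.1) &
      is_condexp (fun t => (h (Z t)).2) X (fun x => x.2)].

Definition min_norm_iv_solution {dZ} {TZ : measurableType dZ} (Z : T -> TZ)
    (X : T -> R * R) (h0 : TZ -> R * R) : Prop :=
  iv_solution Z X h0 /\
  forall h, iv_solution Z X h ->
    (L2_sqnorm Z (fun z => (h0 z).1) <= L2_sqnorm Z (fun z => (h z).1))%E /\
    (L2_sqnorm Z (fun z => (h0 z).2) <= L2_sqnorm Z (fun z => (h z).2))%E.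

Definition Xcomp (X : T -> R * R) (i : 'I_2) : T -> R :=
  fun t => if i == ord0 then (X t).1 else (X t).2.

Definition oliva (X : T -> R * R) (g : R * R -> R) : 'cV[R]_2 :=
  invmx (\matrix_(i < 2, j < 2) fine 'E_P[Xcomp X i \* Xcomp X j])
  *m (\col_(i < 2) fine 'E_P[Xcomp X i \* (g \o X)]).

End iv_defs.

From HB Require Import structures.
From mathcomp Require Import all_boot all_order all_algebra.
From mathcomp Require Import all_classical all_reals all_analysis.
From mathcomp Require Import ring lra measurable_realfun.
Import Order.TTheory GRing.Theory Num.Theory numFieldNormedType.Exports.
Import HBSimple HBNNSimple.
Local Open Scope classical_set_scope.
Local Open Scope ring_scope.

(* Since X2 is binary, a function of X = (1, X2) is affine in X2, so E[h2(Z) | X] = X2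
   amounts to the two moment conditions E[h2(Z)] = pibar and E[h2(Z) X2] = pibar, and by
   the tower property E[h2(Z) X2] = E[h2(Z) pi(Z)].  The affine candidate
   w = alpha + gamma pi(Z) meets both conditions precisely because
   gamma var(pi(Z)) = pibar (1 - pibar).  Moreover E[h2(Z) w] = (alpha + gamma) pibar for
   every solution h2, so E[h2(Z)^2] = E[w^2] + E[(h2(Z) - w)^2]: w is the minimum-norm
   solution, unique a.s.  For the first component, E[h1(Z)] = 1 forces E[h1(Z)^2] >= 1.
   The OLIVA of the saturated binary model is the coefficient vector of
   g(1, X2) = g(1, 0) + (g(1, 1) - g(1, 0)) X2, and as E[eps | Z] = 0 the IV ratio
   Cov(Y, pi(Z)) / Cov(X2, pi(Z)) recovers the same slope.
   The tower property E[U k(V)] = E[f(V) k(V)] for a dominated multiplier k follows from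
   the indicator form of [is_condexp] via simple functions, monotone approximation with
   dominated convergence, and the splitting k = k^+ - k^-. *)

Section real_expectation.
Context {d : measure_display} {T : measurableType d} {R : realType}
  (P : probability T R).

(* [fine] sends infinite expectations to 0, hence the integrability hypotheses below. *)
Definition Ex (F : T -> R) : R := fine ('E_P[F])%E.

Lemma ExE (F : T -> R) : F \in Lfun P 1 -> ('E_P[F] = (Ex F)%:E)%E.
Proof. by move=> LF; rewrite /Ex fineK// expectation_fin_num. Qed.

Lemma eq_Ex (F G : T -> R) : F =1 G -> Ex F = Ex G.
Proof. by move=> /funext ->. Qed.

Lemma Ex_cst (c : R) : Ex (fun=> c) = c.
Proof. by rewrite /Ex expectation_cst. Qed.

Lemma Ex_ge0 (F : T -> R) : (forall t, 0 <= F t) -> 0 <= Ex F.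
Proof. by move=> F0; apply/fine_ge0/expectation_ge0. Qed.

Lemma Lfun1_measurable (F : T -> R) : F \in Lfun P 1 -> measurable_fun setT F.
Proof. by case/andP; rewrite inE. Qed.

Lemma Lfun2_Lfun1 (F : T -> R) : F \in Lfun P 2%:E -> F \in Lfun P 1.
Proof. exact/Lfun_subset12/fin_num_measure. Qed.

Lemma Lfun1_le (F G : T -> R) : F \in Lfun P 1 -> measurable_fun setT G ->
  (forall t, `|G t| <= F t) -> G \in Lfun P 1.
Proof.
move=> /Lfun1_integrable iF mG GF; apply/Lfun1_integrable.
apply: le_integrable iF => //; first exact/measurable_EFinP.
by move=> t _ /=; rewrite lee_fin (le_trans (GF t)) ?ler_norm.
Qed.

Lemma Lfun1_bounded (G : T -> R) (B : R) : measurable_fun setT G ->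
  (forall t, `|G t| <= B) -> G \in Lfun P 1.
Proof. exact: Lfun1_le (Lfun_cst P B 1). Qed.

Lemma Lfun1_mul_bounded (F G : T -> R) (B : R) : F \in Lfun P 1 ->
  measurable_fun setT G -> (forall t, `|G t| <= B) -> F \* G \in Lfun P 1.
Proof.
move=> LF mG GB; apply: (@Lfun1_le (`|B| \o* (Num.norm \o F))).
- exact/Lfun_scale/Lfun_norm.
- exact/measurable_funM/mG/Lfun1_measurable.
- move=> t /=; rewrite normrM; apply: ler_wpM2l => //.
  exact: le_trans (GB t) (ler_norm _).
Qed.

Lemma Lfun2_bounded (G : T -> R) (B : R) : measurable_fun setT G ->
  (forall t, `|G t| <= B) -> G \in Lfun P 2%:E.
Proof.
move=> mG GB; rewrite inE; apply/andP; split; rewrite inE//=.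
rewrite /finite_norm unlock poweR_lty//.
rewrite (_ : (fun x => _) = (fun x => (G x ^+ 2)%:E)); last first.
  by apply/funext => x /=; rewrite powR_mulrn// real_normK ?num_real.
apply: (@le_lt_trans _ _ (\int[P]_x (B ^+ 2)%:E)%E); last first.
  by rewrite integral_cst//= probability_setT mule1 ltry.
apply: ge0_le_integral => //.
- by move=> t _; rewrite lee_fin sqr_ge0.
- by apply/measurable_EFinP; exact: measurable_funX.
- move=> t _; rewrite lee_fin -real_normK ?num_real//.
  by have := GB t; have := normr_ge0 (G t); nra.
Qed.

Lemma Lfun1_mul_indic (F : T -> R) (A : set T) : F \in Lfun P 1 ->
  measurable A -> F \* \1_A \in Lfun P 1.
Proof.
move=> LF mA; apply: (Lfun1_mul_bounded _ _ 1 LF); first exact/measurable_indicP.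
by move=> t; rewrite indicE; case: (t \in A); rewrite ?normr1 ?normr0.
Qed.

Lemma Lfun1_lin2 (F G : T -> R) (a b : R) : F \in Lfun P 1 -> G \in Lfun P 1 ->
  (fun t => a * F t + b * G t) \in Lfun P 1.
Proof.
move=> LF LG; rewrite (_ : (fun t => _) = (a \o* F) \+ (b \o* G)).
  by apply: rpredD; apply: Lfun_scale.
by apply/funext => t /=; rewrite mulrC [b * _]mulrC.
Qed.

Lemma Ex_lin2 (F G : T -> R) (a b : R) : F \in Lfun P 1 -> G \in Lfun P 1 ->
  Ex (fun t => a * F t + b * G t) = a * Ex F + b * Ex G.
Proof.
move=> LF LG; rewrite /Ex (_ : (fun t => _) = (a \o* F) \+ (b \o* G)).
  by rewrite expectationD ?Lfun_scale// !expectationZl// !ExE.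
by apply/funext => t /=; rewrite mulrC [b * _]mulrC.
Qed.

Lemma ExB (F G : T -> R) : F \in Lfun P 1 -> G \in Lfun P 1 ->
  Ex (fun t => F t - G t) = Ex F - Ex G.
Proof.
move=> LF LG; rewrite -[Ex F]mul1r -mulN1r -Ex_lin2//.
by apply: eq_Ex => t; rewrite mul1r mulN1r.
Qed.

Lemma Ex_lin3 (F G H : T -> R) (a b c : R) :
  F \in Lfun P 1 -> G \in Lfun P 1 -> H \in Lfun P 1 ->
  Ex (fun t => a * F t + b * G t + c * H t) = a * Ex F + b * Ex G + c * Ex H.
Proof.
move=> LF LG LH; have := Ex_lin2 _ _ 1 c (Lfun1_lin2 _ _ a b LF LG) LH.
by under eq_fun do rewrite mul1r; rewrite mul1r Ex_lin2.
Qed.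

Lemma Ex_sqrB (F G : T -> R) : (fun t => F t ^+ 2) \in Lfun P 1 ->
  (fun t => F t * G t) \in Lfun P 1 -> (fun t => G t ^+ 2) \in Lfun P 1 ->
  Ex (fun t => (F t - G t) ^+ 2) =
  Ex (fun t => F t ^+ 2) - 2 * Ex (fun t => F t * G t) + Ex (fun t => G t ^+ 2).
Proof.
move=> LF2 LFG LG2; rewrite -[Ex (fun t => F t ^+ 2)]mul1r -[Ex (fun t => G t ^+ 2)]mul1r.
by rewrite -mulNr -Ex_lin3//; apply: eq_Ex => t; ring.
Qed.

Lemma Lfun1_lin_sum n (c : 'I_n -> R) (G : 'I_n -> T -> R) :
  (forall i, G i \in Lfun P 1) -> (fun t => \sum_(i < n) c i * G i t) \in Lfun P 1.
Proof.
elim: n c G => [|n IH] c G LG.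
  by under eq_fun do rewrite big_ord0; exact: Lfun_cst.
under eq_fun do rewrite big_ord_recr /= -[X in X + _]mul1r.
exact/Lfun1_lin2/LG/IH.
Qed.

Lemma Ex_lin_sum n (c : 'I_n -> R) (G : 'I_n -> T -> R) :
  (forall i, G i \in Lfun P 1) ->
  Ex (fun t => \sum_(i < n) c i * G i t) = \sum_(i < n) c i * Ex (G i).
Proof.
elim: n c G => [|n IH] c G LG.
  by under eq_fun do rewrite big_ord0; rewrite big_ord0 Ex_cst.
under eq_fun do rewrite big_ord_recr /= -[X in X + _]mul1r.
by rewrite Ex_lin2 ?Lfun1_lin_sum// mul1r IH// big_ord_recr.
Qed.

Lemma expectation_ae_eq (F G : T -> R) :
  measurable_fun setT F -> measurable_fun setT G ->
  {ae P, forall t, F t = G t} -> ('E_P[F] = 'E_P[G])%E.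
Proof.
move=> mF mG FG; rewrite unlock; apply: ae_eq_integral => //.
- exact/measurable_EFinP.
- exact/measurable_EFinP.
- by apply: filterS FG => t /= ->.
Qed.

Lemma covariance_ae_eq (F1 F2 G1 G2 : T -> R) :
  measurable_fun setT F1 -> measurable_fun setT F2 ->
  measurable_fun setT G1 -> measurable_fun setT G2 ->
  {ae P, forall t, F1 t = G1 t} -> {ae P, forall t, F2 t = G2 t} ->
  covariance P F1 F2 = covariance P G1 G2.
Proof.
move=> mF1 mF2 mG1 mG2 FG1 FG2.
rewrite unlock (expectation_ae_eq _ _ mF1 mG1 FG1) (expectation_ae_eq _ _ mF2 mG2 FG2).
apply: expectation_ae_eq.
- by apply: measurable_funM; apply: measurable_funB.
- by apply: measurable_funM; apply: measurable_funB.
- by apply: filterS2 FG1 FG2 => t e1 e2; rewrite !mulrfctE /= e1 e2.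
Qed.

Lemma Ex_eq0_ae (G : T -> R) : G \in Lfun P 1 -> (forall t, 0 <= G t) ->
  Ex G = 0 -> {ae P, forall t, G t = 0}.
Proof.
move=> LG G0 EG0.
have mG : measurable_fun setT (EFin \o G) by exact/measurable_EFinP/Lfun1_measurable.
have /(ae_eq_integral_abs P measurableT mG) : (\int[P]_t `|(EFin \o G) t| = 0)%E.
  rewrite -[RHS]/(0%:E) -EG0 -ExE// unlock.
  by apply: eq_integral => t _ /=; rewrite ger0_norm.
by apply: filterS => t /(_ I) [].
Qed.

Lemma Ex_dominated_cvg (F_ : nat -> T -> R) (F D : T -> R) :
  (forall n, measurable_fun setT (F_ n)) -> measurable_fun setT F ->
  (forall t, F_ ^~ t @ \oo --> F t) -> D \in Lfun P 1 ->
  (forall n t, `|F_ n t| <= D t) ->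
  Ex (F_ n) @[n --> \oo] --> Ex F.
Proof.
move=> mF_ mF F_F /Lfun1_integrable iD F_D.
have [] := @dominated_convergence _ _ _ P setT measurableT
  (fun n => EFin \o F_ n) (EFin \o F) (EFin \o D).
- by move=> n; apply/measurable_EFinP.
- exact/measurable_EFinP.
- by apply: aeW => t _; apply/fine_cvgP; split; [exact: nearW | exact: F_F].
- exact: iD.
- by apply: aeW => t n _; rewrite /= lee_fin.
move=> /Lfun1_integrable LF _ cvgF.
have -> : (fun n => Ex (F_ n)) =
    fine \o [sequence (\int[P]_(t in setT) (EFin \o F_ n) t)%E]_n.
  by apply/funext => n; rewrite /Ex unlock.
by apply: fine_cvg; rewrite -ExE// unlock.
Qed.

End real_expectation.

Arguments Lfun1_measurable {d T R P F}.
Arguments Lfun2_Lfun1 {d T R P F}.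
Arguments Lfun1_le {d T R P F G}.
Arguments Lfun1_bounded {d T R P G B}.
Arguments Lfun1_mul_bounded {d T R P F G B}.
Arguments Lfun2_bounded {d T R P G B}.
Arguments Lfun1_mul_indic {d T R P F A}.
Arguments Ex_eq0_ae {d T R P G}.
Arguments covariance_ae_eq {d T R P F1 F2 G1 G2}.

Section condexp_tower.
Context {d : measure_display} {T : measurableType d} {R : realType}
  (P : probability T R) {dV : measure_display} {TV : measurableType dV}
  (U : T -> R) (V : T -> TV) (f : TV -> R).
Hypotheses (mV : measurable_fun setT V) (Uf : is_condexp P U V f).

Let LU : U \in Lfun P 1.
Proof. by case: Uf => iU _ _ _; apply/Lfun1_integrable. Qed.

Let LfV : f \o V \in Lfun P 1.
Proof. by case: Uf => _ _ ifV _; apply/Lfun1_integrable. Qed.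

Let mU : measurable_fun setT U. Proof. exact: Lfun1_measurable LU. Qed.

Let mfV : measurable_fun setT (f \o V). Proof. exact: Lfun1_measurable LfV. Qed.

Let mpreimage (B : set TV) : measurable B -> measurable (V @^-1` B).
Proof. by move=> mB; rewrite -[X in measurable X]setTI; exact: mV. Qed.

Lemma condexp_mul_sfun (s : {sfun TV >-> R}) :
  Ex P (fun t => U t * s (V t)) = Ex P (fun t => f (V t) * s (V t)).
Proof.
pose S := finmap.enum_fset (fset_set (range s)).
pose A i := V @^-1` (s @^-1` [set S`_i]).
have mA i : measurable (A i) by apply/mpreimage/measurable_funPTI.
have Ex_mul_s (F : T -> R) : F \in Lfun P 1 ->
    Ex P (fun t => F t * s (V t)) = \sum_(i < size S) S`_i * Ex P (F \* \1_(A i)).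
  move=> LF; rewrite -Ex_lin_sum => [|i]; last exact: Lfun1_mul_indic.
  apply: eq_Ex => t; rewrite (fimfunEord s (V t)) -/S mulr_sumr.
  by apply: eq_bigr => i _; rewrite /= !indicE /A; ring.
rewrite !Ex_mul_s//; apply: eq_bigr => i _; congr (_ * fine _).
by case: Uf => _ _ _ ->//; exact: measurable_funPTI.
Qed.

Lemma condexp_mul_ge0 (k : TV -> R) (D : T -> R) :
  measurable_fun setT k -> (forall v, 0 <= k v) -> D \in Lfun P 1 ->
  (forall t, `|U t| * k (V t) <= D t) -> (forall t, `|f (V t)| * k (V t) <= D t) ->
  Ex P (fun t => U t * k (V t)) = Ex P (fun t => f (V t) * k (V t)).
Proof.
move=> mk k0 LD UD fD.
have mEk : measurable_fun setT (EFin \o k) by exact/measurable_EFinP.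
have Ek0 v : setT v -> (0 <= (EFin \o k) v)%E by rewrite lee_fin.
pose s n := nnsfun_approx measurableT mEk n.
have s_cvg v : s ^~ v @ \oo --> k v.
  under eq_fun do rewrite /s nnsfun_approxE.
  exact: cvg_approx Ek0 I (ltry _).
have s_le n v : `|s n v| <= k v.
  by rewrite ger0_norm// -lee_fin /s nnsfun_approxE; exact: le_approx.
have cvg_mul (W : T -> R) : measurable_fun setT W ->
    (forall t, `|W t| * k (V t) <= D t) ->
    Ex P (fun t => W t * s n (V t)) @[n --> \oo] --> Ex P (fun t => W t * k (V t)).
  move=> mW WD; apply: Ex_dominated_cvg LD _.
  - by move=> n; apply: measurable_funM => //; exact: measurableT_comp mV.
  - by apply: measurable_funM => //; exact: measurableT_comp mk mV.
  - by move=> t; apply: cvgM; [exact: cvg_cst | exact: s_cvg].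
  - by move=> n t; rewrite normrM (le_trans _ (WD t))// ler_wpM2l.
have := cvg_mul U mU UD; under eq_fun do rewrite condexp_mul_sfun.
by move=> UsV; exact: cvg_unique _ UsV (cvg_mul (f \o V) mfV fD).
Qed.

Lemma condexp_mul (k : TV -> R) (D : T -> R) :
  measurable_fun setT k -> D \in Lfun P 1 ->
  (forall t, `|U t| * `|k (V t)| <= D t) -> (forall t, `|f (V t)| * `|k (V t)| <= D t) ->
  Ex P (fun t => U t * k (V t)) = Ex P (fun t => f (V t) * k (V t)).
Proof.
move=> mk LD UD fD.
have normrE v : `|k v| = k^\+ v + k^\- v by rewrite -[LHS]/((Num.norm \o k) v) -funrposDneg.
have kpos v : 0 <= k^\+ v <= `|k v| by rewrite funrpos_ge0 normrE lerDl funrneg_ge0.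
have kneg v : 0 <= k^\- v <= `|k v| by rewrite funrneg_ge0 normrE lerDr funrpos_ge0.
have dom (W : T -> R) (kk : TV -> R) : (forall v, 0 <= kk v <= `|k v|) ->
    (forall t, `|W t| * `|k (V t)| <= D t) -> forall t, `|W t| * kk (V t) <= D t.
  move=> kk_k WD t; have /andP[_ kk_le] := kk_k (V t).
  by rewrite (le_trans _ (WD t))// ler_wpM2l.
have Ex_split (W : T -> R) : measurable_fun setT W ->
    (forall t, `|W t| * `|k (V t)| <= D t) ->
    Ex P (fun t => W t * k (V t)) =
    Ex P (fun t => W t * k^\+ (V t)) - Ex P (fun t => W t * k^\- (V t)).
  move=> mW WD.
  have L (kk : TV -> R) : measurable_fun setT kk -> (forall v, 0 <= kk v <= `|k v|) ->
      (fun t => W t * kk (V t)) \in Lfun P 1.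
    move=> mkk kk_k; apply: Lfun1_le LD _ _ => [|t].
      by apply: measurable_funM => //; exact: measurableT_comp mkk mV.
    by have /andP[kk0 _] := kk_k (V t); rewrite normrM (ger0_norm kk0) dom.
  rewrite -ExB ?(L _ (measurable_funrpos mk) kpos) ?(L _ (measurable_funrneg mk) kneg)//.
  by apply: eq_Ex => t; rewrite -mulrBr -[in LHS](funrposBneg k).
rewrite Ex_split// (Ex_split (f \o V))//; congr (_ - _).
- apply: (condexp_mul_ge0 _ D) => //; first exact: measurable_funrpos.
  + exact: dom _ _ kpos UD.
  + exact: dom _ _ kpos fD.
- apply: (condexp_mul_ge0 _ D) => //; first exact: measurable_funrneg.
  + exact: dom _ _ kneg UD.
  + exact: dom _ _ kneg fD.
Qed.

Lemma condexp_ae_notin (A : set R) (c : R) : measurable A ->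
  (forall x t, A x -> 0 < c * (x - U t)) -> {ae P, forall t, ~ A (f (V t))}.
Proof.
move=> mA cA; case: Uf => _ mf _ UfA.
have mfA : measurable (f @^-1` A) by rewrite -[X in measurable X]setTI; exact: mf.
have mVfA := mpreimage _ mfA.
pose I := \1_(V @^-1` (f @^-1` A)) : T -> R.
pose G t := c * (f (V t) * I t) + (- c) * (U t * I t).
have GE t : G t = c * (f (V t) - U t) * I t by rewrite /G; ring.
have LG : G \in Lfun P 1 by apply: Lfun1_lin2; exact: Lfun1_mul_indic.
have G0 t : 0 <= G t.
  rewrite GE /I indicE; case: (boolP (t \in _)) => [/set_mem At|_].
    by rewrite mulr1 ltW// cA.
  by rewrite mulr0.
have EG0 : Ex P G = 0.
  rewrite Ex_lin2 ?Lfun1_mul_indic//.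
  have -> : Ex P (fun t => f (V t) * I t) = Ex P (fun t => U t * I t) by rewrite /Ex UfA.
  by rewrite mulNr addrN.
apply: filterS (Ex_eq0_ae LG G0 EG0) => t + At.
by rewrite GE /I indicE mem_set// mulr1 => /eqP; rewrite gt_eqF// cA.
Qed.

Lemma condexp_ae_01 : (forall t, 0 <= U t <= 1) -> {ae P, forall t, 0 <= f (V t) <= 1}.
Proof.
move=> U01.
have gt1 : {ae P, forall t, ~ `]1, +oo[%classic (f (V t))}.
  apply: (condexp_ae_notin _ 1) => [|x t]; first exact: measurable_itv.
  by rewrite /= in_itv /= andbT mul1r; have /andP[_ U1] := U01 t; lra.
have lt0 : {ae P, forall t, ~ `]-oo, 0[%classic (f (V t))}.
  apply: (condexp_ae_notin _ (-1)) => [|x t]; first exact: measurable_itv.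
  by rewrite /= in_itv /=; have /andP[U0 _] := U01 t; lra.
apply: filterS2 gt1 lt0 => t ngt1 nlt0.
by rewrite !leNgt; apply/andP; split; apply/negP => ?; [apply: nlt0 | apply: ngt1];
  rewrite /= in_itv /= ?andbT.
Qed.

Lemma is_condexp_ae_eq (g : TV -> R) : measurable_fun setT g -> g \o V \in Lfun P 1 ->
  {ae P, forall t, f (V t) = g (V t)} -> is_condexp P U V g.
Proof.
move=> mg Lg fg; case: Uf => iU _ _ UfA.
split => //; first exact/Lfun1_integrable.
move=> A mA; rewrite UfA//; apply: expectation_ae_eq.
- by apply: measurable_funM => //; exact/measurable_indicP/mpreimage.
- by apply: measurable_funM; [exact: Lfun1_measurable Lg | exact/measurable_indicP/mpreimage].
- by apply: filterS fg => t /= ->.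
Qed.

End condexp_tower.

Arguments condexp_mul {d T R P dV TV U V f}.
Arguments condexp_ae_01 {d T R P dV TV U V f}.
Arguments is_condexp_ae_eq {d T R P dV TV U V f}.

Lemma condexp0_mul_bounded {d : measure_display} {T : measurableType d} {R : realType}
    (P : probability T R) {dV : measure_display} {TV : measurableType dV}
    (U : T -> R) (V : T -> TV) (k : TV -> R) (B : R) :
  measurable_fun setT V -> is_condexp P U V (cst 0) -> measurable_fun setT k ->
  (forall v, `|k v| <= B) -> Ex P (fun t => U t * k (V t)) = 0.
Proof.
move=> mV U0 mk kB.
have LU : U \in Lfun P 1 by case: U0 => iU _ _ _; apply/Lfun1_integrable.
rewrite (condexp_mul mV U0 k (B \o* (Num.norm \o U)) mk).
- by under eq_Ex do rewrite /= mul0r; exact: Ex_cst.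
- exact/Lfun_scale/Lfun_norm.
- by move=> t; rewrite /= ler_wpM2l.
- by move=> t /=; rewrite normr0 mul0r mulr_ge0// (le_trans _ (kB (V t))).
Qed.

Lemma ord2P (i : 'I_2) : i = ord0 \/ i = ord_max.
Proof. by case: i => [[|[|]]] //= ?; [left|right]; apply: val_inj. Qed.

Lemma unitmx_moments_binary (F : fieldType) (p : F) : p != 0 -> 1 - p != 0 ->
  \matrix_(i < 2, j < 2) (if (i == ord0) && (j == ord0) then 1 else p) \in unitmx.
Proof.
move=> p_neq0 pC_neq0; set M := (A in A \in unitmx).
pose N := (p * (1 - p))^-1 *:
  \matrix_(i < 2, j < 2) (if i == j then (if i == ord0 then p else 1) else - p).
suff MN : M *m N = 1%:M by have [] := mulmx1_unit MN.
apply/matrixP => i j; rewrite !mxE !big_ord_recr big_ord0 /= add0r !mxE.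
by case: (ord2P i) => ->; case: (ord2P j) => -> /=; field; rewrite p_neq0 pC_neq0.
Qed.

Section binary_instrument.
Context {d : measure_display} {T : measurableType d} {R : realType}
  (P : probability T R) {dZ : measure_display} {TZ : measurableType dZ}
  (Z : T -> TZ) (X2 : T -> R) (pi : TZ -> R).
Hypotheses (mZ : measurable_fun setT Z) (mX2 : measurable_fun setT X2)
  (X2_01 : forall t, X2 t = 0 \/ X2 t = 1) (X2pi : is_condexp P X2 Z pi).

Local Notation X := (fun t => ((1 : R), X2 t)).

Definition pibar : R := fine (P (X2 @^-1` [set 1])).
Definition varpi : R := fine 'V_P[pi \o Z].
Definition gamma_pi : R := pibar * (1 - pibar) / varpi.
Definition alpha_pi : R := pibar * (1 - gamma_pi).

(* [pi] is only known to be integrable; clipping it to [0, 1] makes it bounded while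
   changing it on a null set only. *)
Definition pi01 (z : TZ) : R := Num.min (Num.max (pi z) 0) 1.

Definition min_norm_sol (z : TZ) : R * R := (1, alpha_pi + gamma_pi * pi01 z).

Lemma pi01_01 z : 0 <= pi01 z <= 1.
Proof. by rewrite le_min ler01 le_max lexx orbT ge_min lexx orbT. Qed.

Lemma normr_pi01_le1 z : `|pi01 z| <= 1.
Proof. by have /andP[? ?] := pi01_01 z; rewrite ger0_norm. Qed.

Lemma normr_X2_le1 t : `|X2 t| <= 1.
Proof. by case: (X2_01 t) => ->; rewrite ?normr0 ?normr1. Qed.

Let mpi : measurable_fun setT pi.
Proof. by case: X2pi. Qed.

Let mpiZ : measurable_fun setT (pi \o Z).
Proof. exact: measurableT_comp mpi mZ. Qed.

Lemma measurable_pi01 : measurable_fun setT pi01.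
Proof. by apply: measurable_minr => //; apply: measurable_maxr. Qed.

Let mpi01Z : measurable_fun setT (pi01 \o Z).
Proof. exact: measurableT_comp measurable_pi01 mZ. Qed.

Let Lpi01Z : pi01 \o Z \in Lfun P 1.
Proof. exact: Lfun1_bounded mpi01Z (fun t => normr_pi01_le1 (Z t)). Qed.

Let LX2 : X2 \in Lfun P 1.
Proof. exact: Lfun1_bounded mX2 normr_X2_le1. Qed.

Let Lpi01Z2 : (fun t => pi01 (Z t) ^+ 2) \in Lfun P 1.
Proof.
under eq_fun do rewrite expr2.
exact: Lfun1_mul_bounded Lpi01Z mpi01Z (fun t => normr_pi01_le1 (Z t)).
Qed.

Lemma pi_ae_pi01 : {ae P, forall t, pi (Z t) = pi01 (Z t)}.
Proof.
have X2_in01 t : 0 <= X2 t <= 1 by case: (X2_01 t) => ->; rewrite lexx ler01.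
apply: filterS (condexp_ae_01 mZ X2pi X2_in01) => t /andP[pi0 pi1].
by rewrite /pi01 (elimT max_idPl pi0) (elimT min_idPl pi1).
Qed.

Lemma condexp_pi01 : is_condexp P X2 Z pi01.
Proof. exact: is_condexp_ae_eq mZ X2pi _ measurable_pi01 Lpi01Z pi_ae_pi01. Qed.

Lemma Ex_X2_mul (k : TZ -> R) : measurable_fun setT k -> k \o Z \in Lfun P 1 ->
  Ex P (fun t => k (Z t) * X2 t) = Ex P (fun t => k (Z t) * pi01 (Z t)).
Proof.
move=> mk Lk; transitivity (Ex P (fun t => X2 t * k (Z t))).
  by apply: eq_Ex => t; exact: mulrC.
rewrite (condexp_mul mZ condexp_pi01 k (Num.norm \o (k \o Z))) => //.
- by apply: eq_Ex => t; exact: mulrC.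
- exact: Lfun_norm.
- by move=> t; rewrite /= ler_piMl// normr_X2_le1.
- by move=> t; rewrite /= ler_piMl// normr_pi01_le1.
Qed.

Lemma indic_X2 t : \1_(X2 @^-1` [set 1]) t = X2 t :> R.
Proof.
rewrite indicE; case: (X2_01 t) => X2t; rewrite X2t.
- by rewrite memNset//= X2t => /esym/eqP; rewrite oner_eq0.
- by rewrite mem_set.
Qed.

Lemma Ex_X2 : Ex P X2 = pibar.
Proof.
have mX2_1 : measurable (X2 @^-1` [set 1]).
  by rewrite -[S in measurable S]setTI; exact: mX2.
rewrite /pibar -(expectation_indic P mX2_1) /Ex; congr (fine 'E_P[_]).
by apply/funext => t; rewrite indic_X2.
Qed.

Lemma Ex_X2_sq : Ex P (fun t => X2 t * X2 t) = pibar.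
Proof. by rewrite -Ex_X2; apply: eq_Ex => t; case: (X2_01 t) => ->; rewrite ?mulr0 ?mulr1. Qed.

Lemma Ex_pi01 : Ex P (fun t => pi01 (Z t)) = pibar.
Proof.
rewrite -Ex_X2 (@eq_Ex _ _ _ P X2 (fun t => 1 * X2 t)) => [|t]; last by rewrite mul1r.
by rewrite (Ex_X2_mul (fun=> 1)) ?Lfun_cst//; apply: eq_Ex => t; rewrite mul1r.
Qed.

Lemma varpiE : varpi = Ex P (fun t => pi01 (Z t) ^+ 2) - pibar ^+ 2.
Proof.
have Lpi01Zsq : (pi01 \o Z) * (pi01 \o Z) \in Lfun P 1.
  exact: Lfun1_mul_bounded Lpi01Z mpi01Z (fun t => normr_pi01_le1 (Z t)).
rewrite /varpi /variance (covariance_ae_eq mpiZ mpiZ mpi01Z mpi01Z pi_ae_pi01 pi_ae_pi01).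
rewrite covarianceE// !ExE// -EFinM -EFinB /= -[Ex P (pi01 \o Z)]/(Ex P (fun t => pi01 (Z t))).
by rewrite Ex_pi01 expr2; congr (_ - _); apply: eq_Ex => t; rewrite /= expr2.
Qed.

Let mX : measurable_fun setT X.
Proof. exact: measurable_fun_pair. Qed.

Let mXpre (A : set (R * R)) : measurable A -> measurable (X @^-1` A).
Proof. by move=> mA; rewrite -[S in measurable S]setTI; exact: mX. Qed.

Let measurable_snd1 : measurable [set x : R * R | x.2 = 1].
Proof.
by have := @measurable_snd _ _ R R measurableT [set 1] (measurable_set1 _); rewrite setTI.
Qed.

Lemma Ex_mul_indic_X (U : T -> R) (A : set (R * R)) : U \in Lfun P 1 ->
  Ex P (U \* \1_(X @^-1` A)) =
  \1_A (1, 0) * Ex P U + (\1_A (1, 1) - \1_A (1, 0)) * Ex P (fun t => U t * X2 t).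
Proof.
move=> LU; rewrite -Ex_lin2//; last exact: Lfun1_mul_bounded LU mX2 normr_X2_le1.
apply: eq_Ex => t /=; have -> : \1_(X @^-1` A) t = \1_A (1, X2 t) :> R by rewrite !indicE.
by case: (X2_01 t) => ->; ring.
Qed.

Lemma condexp_X_sndP (U : T -> R) : U \in Lfun P 1 ->
  is_condexp P U X snd <-> Ex P U = pibar /\ Ex P (fun t => U t * X2 t) = pibar.
Proof.
move=> LU; split => [[_ _ _ UA] | [EU EUX2]].
  have EA A : measurable A -> Ex P (U \* \1_(X @^-1` A)) = Ex P (X2 \* \1_(X @^-1` A)).
    by move=> mA; rewrite /Ex UA.
  have := EA _ measurableT; have := EA _ measurable_snd1.
  have snd1_10 : \1_[set x : R * R | x.2 = 1] (1, 0) = 0 :> R.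
    by rewrite indicE memNset//= => /esym/eqP; rewrite oner_eq0.
  have snd1_11 : \1_[set x : R * R | x.2 = 1] (1, 1) = 1 :> R by rewrite indicE mem_set.
  rewrite !Ex_mul_indic_X// Ex_X2 Ex_X2_sq indicT snd1_10 snd1_11 /=.
  by move=> EUX2 EU; split; lra.
split => //; first exact/Lfun1_integrable.
- exact/Lfun1_integrable.
- move=> A mA; have mXA := mXpre _ mA.
  rewrite !ExE ?Lfun1_mul_indic//; congr EFin; rewrite (_ : snd \o X = X2)//.
  by rewrite !Ex_mul_indic_X// EU EUX2 Ex_X2 Ex_X2_sq.
Qed.

Lemma is_condexp_X_fst : is_condexp P (fun=> 1) X fst.
Proof.
by split => //; apply/Lfun1_integrable; exact: (Lfun_cst P 1 1).
Qed.

Lemma condexp_X_fst_Ex (U : T -> R) : is_condexp P U X fst -> Ex P U = 1.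
Proof.
case=> _ _ _ /(_ _ measurableT); rewrite preimage_setT indicT => EU1.
transitivity (Ex P (U \* cst 1)); first by apply: eq_Ex => t; rewrite /= mulr1.
by rewrite /Ex EU1 -/(Ex P _) -[RHS](Ex_cst P 1); apply: eq_Ex => t; rewrite /= mulr1.
Qed.

Lemma alpha_gamma_pibar : alpha_pi + gamma_pi * pibar = pibar.
Proof. by rewrite /alpha_pi; ring. Qed.

Lemma alpha_gamma_moment2 : 0 < varpi ->
  alpha_pi * pibar + gamma_pi * Ex P (fun t => pi01 (Z t) ^+ 2) = pibar.
Proof.
move=> varpi_gt0; rewrite /alpha_pi /gamma_pi varpiE.
by field; rewrite -varpiE gt_eqF.
Qed.

Let mw : measurable_fun setT (fun z => (min_norm_sol z).2).
Proof.
by apply: measurable_funD => //; apply: measurable_funM => //; exact: measurable_pi01.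
Qed.

Let normr_w z : `|(min_norm_sol z).2| <= `|alpha_pi| + `|gamma_pi|.
Proof. by rewrite (le_trans (ler_normD _ _))// lerD2l normrM ler_piMr// normr_pi01_le1. Qed.

Let mwZ : measurable_fun setT (fun t => (min_norm_sol (Z t)).2).
Proof. exact: measurableT_comp mw mZ. Qed.

Let Lw : (fun z => (min_norm_sol z).2) \o Z \in Lfun P 1.
Proof. exact: Lfun1_bounded mwZ (fun t => normr_w (Z t)). Qed.

Let Lw_sq : (fun t => (min_norm_sol (Z t)).2 ^+ 2) \in Lfun P 1.
Proof.
under eq_fun do rewrite expr2.
exact: Lfun1_mul_bounded Lw mwZ (fun t => normr_w (Z t)).
Qed.

Lemma Ex_min_norm_sol2 : 0 < varpi ->
  Ex P (fun t => (min_norm_sol (Z t)).2) = pibar /\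
  Ex P (fun t => (min_norm_sol (Z t)).2 * X2 t) = pibar.
Proof.
move=> varpi_gt0; rewrite (Ex_X2_mul (fun z => (min_norm_sol z).2))//=.
rewrite (@eq_Ex _ _ _ P _ (fun t => alpha_pi * 1 + gamma_pi * pi01 (Z t))) => [|t].
  rewrite (@eq_Ex _ _ _ P (fun t => _ * _)
    (fun t => alpha_pi * pi01 (Z t) + gamma_pi * pi01 (Z t) ^+ 2)) => [|t]; last first.
    by rewrite /=; ring.
  rewrite !Ex_lin2 ?Lfun_cst// Ex_cst Ex_pi01 mulr1 alpha_gamma_pibar.
  by split => //; exact: alpha_gamma_moment2.
by rewrite mulr1.
Qed.

Lemma iv_solution_min_norm_sol : 0 < varpi -> iv_solution P Z X min_norm_sol.
Proof.
move=> varpi_gt0; split.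
- split => //; apply: (Lfun2_bounded (B := 1)) => [|t]; last by rewrite /= normr1.
  exact: measurable_cst.
- split => //; exact: Lfun2_bounded mwZ (fun t => normr_w (Z t)).
- exact: is_condexp_X_fst.
- by apply/condexp_X_sndP => //; exact: Ex_min_norm_sol2.
Qed.

Lemma Ex_mul_min_norm_sol (k : TZ -> R) : measurable_fun setT k -> k \o Z \in Lfun P 1 ->
  Ex P (fun t => k (Z t)) = pibar -> Ex P (fun t => k (Z t) * X2 t) = pibar ->
  Ex P (fun t => k (Z t) * (min_norm_sol (Z t)).2) = (alpha_pi + gamma_pi) * pibar.
Proof.
move=> mk Lk Ek EkX2.
rewrite (@eq_Ex _ _ _ P _ (fun t => alpha_pi * k (Z t) + gamma_pi * (k (Z t) * pi01 (Z t)))).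
  rewrite Ex_lin2 -?Ex_X2_mul ?Ek ?EkX2 ?mulrDl//.
  exact: Lfun1_mul_bounded Lk mpi01Z (fun t => normr_pi01_le1 (Z t)).
by move=> t /=; ring.
Qed.

Lemma L2_sqnorm_iv_solution2 (h : TZ -> R * R) : 0 < varpi -> iv_solution P Z X h ->
  L2_sqnorm P Z (fun z => (h z).2) =
  (Ex P (fun t => (min_norm_sol (Z t)).2 ^+ 2) +
   Ex P (fun t => ((h (Z t)).2 - (min_norm_sol (Z t)).2) ^+ 2))%:E.
Proof.
move=> varpi_gt0 [_ [mk Lk2] _ hX].
have Lk := Lfun2_Lfun1 Lk2.
have Lk_sq : (fun t => (h (Z t)).2 ^+ 2) \in Lfun P 1.
  exact/Lfun1_integrable/Lfun2_integrable_sqr.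
have [Ek EkX2] := (condexp_X_sndP _ Lk).1 hX.
have [Ew EwX2] := Ex_min_norm_sol2 varpi_gt0.
have Lkw : (fun t => (h (Z t)).2 * (min_norm_sol (Z t)).2) \in Lfun P 1.
  exact: Lfun1_mul_bounded Lk mwZ (fun t => normr_w (Z t)).
rewrite /L2_sqnorm ExE// Ex_sqrB// (Ex_mul_min_norm_sol _ mk Lk Ek EkX2).
under [X in _ = (_ + (_ + X))%:E]eq_Ex do rewrite expr2.
under [X in _ = (X + _)%:E]eq_Ex do rewrite expr2.
by rewrite (Ex_mul_min_norm_sol _ mw Lw Ew EwX2); congr EFin; ring.
Qed.

Lemma one_le_L2_sqnorm_iv_solution1 (h : TZ -> R * R) : iv_solution P Z X h ->
  (1 <= L2_sqnorm P Z (fun z => (h z).1))%E.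
Proof.
case=> [[mk Lk2] _ /condexp_X_fst_Ex Ek _].
have Lk_sq : (fun t => (h (Z t)).1 ^+ 2) \in Lfun P 1.
  exact/Lfun1_integrable/Lfun2_integrable_sqr.
have Lk := Lfun2_Lfun1 Lk2.
have := Ex_ge0 P (fun t => ((h (Z t)).1 - 1) ^+ 2) (fun t => sqr_ge0 _).
rewrite (@eq_Ex _ _ _ P _ (fun t => 1 * (h (Z t)).1 ^+ 2 + (-2) * (h (Z t)).1 + 1 * 1)).
  by rewrite Ex_lin3 ?Lfun_cst// Ek Ex_cst /L2_sqnorm ExE// lee_fin; lra.
by move=> t; ring.
Qed.

Lemma L2_sqnorm_min_norm_sol1 : L2_sqnorm P Z (fun z => (min_norm_sol z).1) = 1%E.
Proof.
rewrite /L2_sqnorm (_ : (fun t => _) = cst 1) ?expectation_cst//.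
by apply/funext => t; rewrite /= expr1n.
Qed.

Lemma L2_sqnorm_min_norm_sol2 : L2_sqnorm P Z (fun z => (min_norm_sol z).2) =
  (Ex P (fun t => (min_norm_sol (Z t)).2 ^+ 2))%:E.
Proof. by rewrite /L2_sqnorm ExE. Qed.

Lemma min_norm_iv_solution_min_norm_sol : 0 < varpi ->
  min_norm_iv_solution P Z X min_norm_sol.
Proof.
move=> varpi_gt0; split => [|h hsol]; first exact: iv_solution_min_norm_sol.
split; first by rewrite L2_sqnorm_min_norm_sol1; exact: one_le_L2_sqnorm_iv_solution1.
rewrite L2_sqnorm_min_norm_sol2 L2_sqnorm_iv_solution2// lee_fin lerDl.
by apply: Ex_ge0 => t; exact: sqr_ge0.
Qed.

Lemma min_norm_iv_solution_ae (h0 : TZ -> R * R) : 0 < varpi ->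
  min_norm_iv_solution P Z X h0 ->
  {ae P, forall t, (h0 (Z t)).2 = alpha_pi + gamma_pi * pi (Z t)}.
Proof.
move=> varpi_gt0 [h0sol /(_ _ (iv_solution_min_norm_sol varpi_gt0)) [_]].
rewrite L2_sqnorm_min_norm_sol2 L2_sqnorm_iv_solution2// lee_fin gerDl => Ediff_le0.
have Ediff_sq_ge0 t : 0 <= ((h0 (Z t)).2 - (min_norm_sol (Z t)).2) ^+ 2 by exact: sqr_ge0.
have Ediff0 : Ex P (fun t => ((h0 (Z t)).2 - (min_norm_sol (Z t)).2) ^+ 2) = 0.
  by apply/eqP; rewrite eq_le Ediff_le0 Ex_ge0.
have Ldiff : (fun t => ((h0 (Z t)).2 - (min_norm_sol (Z t)).2) ^+ 2) \in Lfun P 1.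
  case: h0sol => _ [_ Lk2] _ _; apply/Lfun1_integrable/Lfun2_integrable_sqr.
  rewrite (_ : (fun t => _) = ((fun z => (h0 z).2) \o Z) - (fun t => (min_norm_sol (Z t)).2))//.
  have := rpredB Lk2 (Lfun2_bounded mwZ (fun t => normr_w (Z t))).
  by apply; rewrite lee_fin ler1n.
apply: filterS2 pi_ae_pi01 (Ex_eq0_ae Ldiff Ediff_sq_ge0 Ediff0) => t -> /eqP.
by rewrite sqrf_eq0 subr_eq0 => /eqP ->.
Qed.

Lemma eval_binary (g : R * R -> R) t :
  g (1, X2 t) = g (1, 0) + (g (1, 1) - g (1, 0)) * X2 t.
Proof. by case: (X2_01 t) => ->; ring. Qed.

Lemma oliva_binary (g : R * R -> R) : 0 < pibar < 1 ->
  oliva P X g = \col_(i < 2) (if i == ord0 then g (1, 0) else g (1, 1) - g (1, 0)).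
Proof.
move=> /andP[pibar_gt0 pibar_lt1]; rewrite /oliva; set M := (A in invmx A).
have Xcomp_le1 i t : `|Xcomp X i t| <= 1.
  by rewrite /Xcomp; case: (i == ord0); rewrite ?normr1 ?normr_X2_le1.
have mXcomp i : measurable_fun setT (Xcomp X i) by rewrite /Xcomp; case: (i == ord0).
have LXcomp i : Xcomp X i \in Lfun P 1 := Lfun1_bounded (mXcomp i) (Xcomp_le1 i).
have LXcomp2 i j : Xcomp X i \* Xcomp X j \in Lfun P 1.
  exact: Lfun1_mul_bounded (LXcomp i) (mXcomp j) (Xcomp_le1 j).
have ME : M = \matrix_(i < 2, j < 2) (if (i == ord0) && (j == ord0) then 1 else pibar).
  apply/matrixP => i j; rewrite !mxE -[fine _]/(Ex P _).
  case: (ord2P i) => ->; case: (ord2P j) => -> /=;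
    [rewrite -[RHS](Ex_cst P 1) | rewrite -[RHS]Ex_X2 | rewrite -[RHS]Ex_X2
    | rewrite -[RHS]Ex_X2_sq];
    by apply: eq_Ex => t; rewrite /Xcomp /= ?mulr1 ?mul1r.
have Mbeta : \col_(i < 2) fine 'E_P[Xcomp X i \* (g \o X)] =
    M *m \col_(i < 2) (if i == ord0 then g (1, 0) else g (1, 1) - g (1, 0)).
  apply/matrixP => i k; rewrite !mxE !big_ord_recr big_ord0 /= add0r !mxE.
  rewrite -![fine _]/(Ex P _) mulrC [X in _ = _ + X]mulrC -Ex_lin2//.
  by apply: eq_Ex => t /=; rewrite eval_binary /Xcomp /=; ring.
have Munit : M \in unitmx.
  by rewrite ME unitmx_moments_binary// ?subr_eq0 gt_eqF.
by rewrite Mbeta mulKmx.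
Qed.

Let Lpi01Z_mul {F : T -> R} : F \in Lfun P 1 -> F * (pi01 \o Z) \in Lfun P 1.
Proof. by move=> LF; exact: Lfun1_mul_bounded LF mpi01Z (fun t => normr_pi01_le1 (Z t)). Qed.

Lemma covariance_X2_pi : fine (covariance P X2 (pi \o Z)) = varpi.
Proof.
rewrite (covariance_ae_eq mX2 mpiZ mX2 mpi01Z (aeW _ (fun=> erefl)) pi_ae_pi01).
rewrite covarianceE ?Lpi01Z_mul// !ExE ?Lpi01Z_mul// -EFinM -EFinB /=.
rewrite -[Ex P (X2 * _)]/(Ex P (fun t => X2 t * pi01 (Z t))) Ex_X2 Ex_pi01 varpiE.
rewrite (@eq_Ex _ _ _ P _ (fun t => pi01 (Z t) * X2 t)) => [|t]; last exact: mulrC.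
by rewrite (Ex_X2_mul _ measurable_pi01 Lpi01Z).
Qed.

Section linear_model.
Variables (Y eps : T -> R) (g : R * R -> R).
Hypotheses (LY : Y \in Lfun P 1) (eps0 : is_condexp P eps Z (cst 0))
  (Y_model : forall t, Y t = g (X t) + eps t).

Let Leps : eps \in Lfun P 1.
Proof. by case: eps0 => ieps _ _ _; apply/Lfun1_integrable. Qed.

Lemma Ex_linear_model : Ex P Y = g (1, 0) + (g (1, 1) - g (1, 0)) * pibar.
Proof.
have Eeps : Ex P eps = 0.
  rewrite -(condexp0_mul_bounded P eps Z (fun=> 1) 1 mZ eps0) ?normr1//.
  by apply: eq_Ex => t; rewrite mulr1.
rewrite (@eq_Ex _ _ _ P _ (fun t => g (1, 0) * 1 + (g (1, 1) - g (1, 0)) * X2 t + 1 * eps t)).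
  by rewrite Ex_lin3 ?Lfun_cst// Ex_cst Ex_X2 Eeps; ring.
by move=> t; rewrite Y_model eval_binary; ring.
Qed.

Lemma covariance_linear_model_pi :
  fine (covariance P Y (pi \o Z)) = (g (1, 1) - g (1, 0)) * varpi.
Proof.
have mY := Lfun1_measurable LY.
have LYpi01 := Lpi01Z_mul LY.
have Lpi01X2 : (fun t => pi01 (Z t) * X2 t) \in Lfun P 1.
  exact: Lfun1_mul_bounded Lpi01Z mX2 normr_X2_le1.
have Eeps_pi01 : Ex P (fun t => eps t * pi01 (Z t)) = 0.
  by apply: condexp0_mul_bounded mZ eps0 measurable_pi01 normr_pi01_le1.
have EYpi01 : Ex P (fun t => Y t * pi01 (Z t)) =
    g (1, 0) * pibar + (g (1, 1) - g (1, 0)) * Ex P (fun t => pi01 (Z t) ^+ 2).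
  rewrite (@eq_Ex _ _ _ P _ (fun t => g (1, 0) * pi01 (Z t) +
      (g (1, 1) - g (1, 0)) * (pi01 (Z t) * X2 t) + 1 * (eps t * pi01 (Z t)))).
    rewrite Ex_lin3 ?Lpi01Z_mul// Ex_pi01 Eeps_pi01 mulr0 addr0.
    by rewrite (Ex_X2_mul _ measurable_pi01 Lpi01Z).
  by move=> t; rewrite Y_model eval_binary; ring.
rewrite (covariance_ae_eq mY mpiZ mY mpi01Z (aeW _ (fun=> erefl)) pi_ae_pi01).
rewrite covarianceE// !ExE// -EFinM -EFinB /=.
rewrite -[Ex P (Y * _)]/(Ex P (fun t => Y t * pi01 (Z t))) EYpi01.
by rewrite Ex_linear_model Ex_pi01 varpiE; ring.
Qed.

Lemma IV_slope_linear_model : 0 < varpi ->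
  fine (covariance P Y (pi \o Z)) / fine (covariance P X2 (pi \o Z)) = g (1, 1) - g (1, 0).
Proof.
move=> varpi_gt0.
by rewrite covariance_linear_model_pi covariance_X2_pi mulfK// gt_eqF.
Qed.

Lemma IV_intercept_linear_model : 0 < varpi ->
  fine 'E_P[Y] - fine (covariance P Y (pi \o Z)) / fine (covariance P X2 (pi \o Z)) * pibar =
  g (1, 0).
Proof.
move=> varpi_gt0; rewrite IV_slope_linear_model// -[fine _]/(Ex P Y) Ex_linear_model.
by rewrite addrK.
Qed.

End linear_model.

End binary_instrument.

Arguments min_norm_iv_solution_min_norm_sol {d T R P dZ TZ Z X2 pi}.
Arguments min_norm_iv_solution_ae {d T R P dZ TZ Z X2 pi}.
Arguments oliva_binary {d T R P X2}.
Arguments IV_slope_linear_model {d T R P dZ TZ Z X2 pi} mZ mX2 X2_01 X2pi {Y eps g}.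
Arguments IV_intercept_linear_model {d T R P dZ TZ Z X2 pi} mZ mX2 X2_01 X2pi {Y eps g}.

Theorem proposition3 (d : measure_display) (T : measurableType d) (R : realType)
    (P : probability T R) (dZ : measure_display) (TZ : measurableType dZ)
    (Z : T -> TZ) (X2 Y eps : T -> R) (g : R * R -> R) (pi : TZ -> R) :
  let X : T -> R * R := fun t => (1, X2 t) in
  let pibar : R := fine (P (X2 @^-1` [set 1])) in
  let varpi : R := fine ('V_P[pi \o Z]) in
  let gamma : R := pibar * (1 - pibar) / varpi in
  let alpha : R := pibar * (1 - gamma) in
  let alphaIV : R := fine (covariance P Y (pi \o Z)) / fine (covariance P X2 (pi \o Z)) in
  let cIV : R := fine ('E_P[Y]) - alphaIV * pibar in
  measurable_fun setT Z ->
  measurable_fun setT X2 ->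
  (forall t, X2 t = 0 \/ X2 t = 1) ->
  measurable_fun setT g -> (g \o X) \in Lfun P 2 ->
  measurable_fun setT Y ->
  (forall t, Y t = g (X t) + eps t) ->
  is_condexp P eps Z (cst 0) ->
  Y \in Lfun P 2 ->
  is_condexp P X2 Z pi ->
  0 < pibar < 1 ->
  0 < varpi ->
  (exists h : TZ -> R * R, iv_solution P Z X h) /\
  (exists h0 : TZ -> R * R, min_norm_iv_solution P Z X h0) /\
  (forall h0 : TZ -> R * R, min_norm_iv_solution P Z X h0 ->
     {ae P, forall t, (h0 (Z t)).2 = alpha + gamma * pi (Z t)}) /\
  (oliva P X g = \col_(i < 2) (if i == ord0 then cIV else alphaIV)).
Proof.
move=> X pibar varpi gamma alpha alphaIV cIV mZ mX2 X2_01 _ _ _ Y_model eps0 LY X2pi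
  pibar01 varpi_gt0.
have min_sol := min_norm_iv_solution_min_norm_sol mZ mX2 X2_01 X2pi varpi_gt0.
have LY1 := Lfun2_Lfun1 LY.
split; first by exists (min_norm_sol P Z X2 pi); exact: min_sol.1.
split; first by exists (min_norm_sol P Z X2 pi).
split; first by move=> h0; exact: min_norm_iv_solution_ae mZ mX2 X2_01 X2pi h0 varpi_gt0.
rewrite (oliva_binary mX2 X2_01)//; apply/matrixP => i j; rewrite !mxE; case: ifP => _.
- exact/esym/(IV_intercept_linear_model mZ mX2 X2_01 X2pi LY1 eps0 Y_model varpi_gt0).
- exact/esym/(IV_slope_linear_model mZ mX2 X2_01 X2pi LY1 eps0 Y_model varpi_gt0).
Qed.
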